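(* Let $0<p<\frac12$, $\varepsilon=\frac12-p$, and let $k\ge1$. Suppose a fixed comparison query is asked $k$ times, each answer being independently correct with probability $1-p$ and the opposite with probability $p$; let $X$ be the number of ''$<$'' answers and $Y=k-X$ the number of ''$>$'' answers, and let $$R=\frac{(1-p)^Xp^Y+(1-p)^Yp^X}{2}.$$ Then for every constant $c>0$ there is a constant $C'$ such that whenever $k\le c\,\varepsilon^{-2}$, $$\mathbb{E}[R]\le\frac{1}{2^k}\left(1+C'\varepsilon^4k^2\right).$$ Equivalently, for an epoch of length $k=\mathcal{O}(\varepsilon^{-2})$ starting at step $\tau$, the coupled process satisfies $\mathbb{E}[W_{\tau+k}]\le 2^{-k}(1+\mathcal{O}(\varepsilon^4k^2))W_\tau$, where $W_{\tau+k}=W_\tau\cdot R$.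
   Context: Binary search with comparison queries on a linear order: querying $q$, the correct answer is ''$<$'' if the target is smaller than $q$ and ''$>$'' otherwise. The coupled process $W$ is updated at the end of an epoch (a block of $k$ repeated queries to the same element) starting at step $\tau$ by $W_{\tau+k}=W_\tau\frac{(1-p)^Xp^Y+(1-p)^Yp^X}{2}$, with $X,Y$ the numbers of ''$<$'' and ''$>$'' answers in the epoch. *)

From HB Require Import structures.
From mathcomp Require Import all_boot all_order all_algebra.
Set Implicit Arguments. Unset Strict Implicit. Unset Printing Implicit Defensive.
Import Order.TTheory GRing.Theory Num.Theory.
Local Open Scope ring_scope.

Definition epochR {R : realFieldType} (p : R) (x y : nat) : R :=
  ((1 - p) ^+ x * p ^+ y + (1 - p) ^+ y * p ^+ x) / 2.

(* Expectation of epochR p X (k - X) when each of the k independent answers is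
   "<" with probability a (so X ~ Binomial(k, a), Y = k - X). *)
Definition epoch_expect {R : realFieldType} (k : nat) (a p : R) : R :=
  \sum_(x < k.+1)
    'C(k, x)%:R * a ^+ x * (1 - a) ^+ (k - x) * epochR p x (k - x).

From HB Require Import structures.
From mathcomp Require Import all_boot all_order all_algebra.
From mathcomp Require Import ring lra.
From Stdlib Require Import Classical.
Import Order.TTheory GRing.Theory Num.Theory.
Local Open Scope ring_scope.

(* Writing u = (1 - 2p)^2 = 4 eps^2, the binomial theorem collapses the
   expectation to ((1 + u)^k + (1 - u)^k) / 2^(k+1).  The second-order bound
   (1 + x)^k <= 1 + k x + k^2 x^2 (1 + |x|)^k at x = u and x = -u cancels the
   linear terms, leaving 2^-k (1 + k^2 u^2 (1 + u)^k).  Finally (1 + u)^k is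
   bounded in terms of c alone, since k u <= 4 c: split k into q >= 2 k u
   blocks of length s, so that s u <= 1/2 and (1 + u)^s <= 2 by Bernoulli's
   inequality, whence (1 + u)^k <= 4^q.  The field is not assumed
   archimedean; if 8 c exceeds every natural number, then
   (1 + u)^k <= 2^k < 8 c is already a bound. *)

Section PowerBounds.
Variable R : realFieldType.
Implicit Types (x u : R) (k : nat).

Lemma bernoulli_ineq x k : -1 <= x -> 1 + k%:R * x <= (1 + x) ^+ k.
Proof.
move=> x_ge; elim: k => [|k IH]; first by rewrite expr0 mul0r addr0.
have k_ge0 : 0 <= k%:R :> R by [].
rewrite exprS -natr1; nra.
Qed.

Lemma expr1D_le_second_order x k : -1 <= x ->
  (1 + x) ^+ k <= 1 + k%:R * x + k%:R ^+ 2 * x ^+ 2 * (1 + `|x|) ^+ k.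
Proof.
move=> x_ge; elim: k => [|k IH]; first by rewrite !expr0 !mul0r; lra.
have x_le : x <= `|x| := ler_norm x.
have X_ge1 : 1 <= (1 + `|x|) ^+ k by apply: exprn_ege1; rewrite lerDl.
rewrite exprS [(1 + `|x|) ^+ k.+1]exprS -natr1.
set X := (1 + `|x|) ^+ k in IH X_ge1 *; set K := k%:R in IH *.
have K_ge0 : 0 <= K by [].
have x2_ge0 : 0 <= x ^+ 2 := sqr_ge0 x.
have step : (1 + x) * (1 + x) ^+ k <= (1 + x) * (1 + K * x + K ^+ 2 * x ^+ 2 * X).
  by rewrite ler_wpM2l //; lra.
have grow : K * x ^+ 2 + (1 + x) * (K ^+ 2 * x ^+ 2 * X)
    <= (K + 1) ^+ 2 * x ^+ 2 * ((1 + `|x|) * X).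
  have Y_ge1 : 1 <= (1 + `|x|) * X by rewrite -exprS; apply: exprn_ege1; rewrite lerDl.
  have h1 : K <= (2 * K + 1) * ((1 + `|x|) * X) by nra.
  have h2 : (1 + x) * X <= (1 + `|x|) * X by nra.
  have Kx_ge0 : 0 <= K ^+ 2 * x ^+ 2 by rewrite mulr_ge0 ?sqr_ge0.
  have := ler_wpM2l x2_ge0 h1; have := ler_wpM2l Kx_ge0 h2.
  set Y := (1 + `|x|) * X; nra.
nra.
Qed.

Lemma expr1D_le2 u k : 0 <= u -> u <= 1 -> k%:R * u <= 1 / 2 -> (1 + u) ^+ k <= 2.
Proof.
move=> u_ge0 u_le1 ku_le.
have lower : 1 / 2 <= (1 - u) ^+ k.
  have := @bernoulli_ineq (- u) k; rewrite mulrN; lra.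
have prod_le1 : (1 + u) ^+ k * (1 - u) ^+ k <= 1.
  by rewrite -exprMn; apply: exprn_ile1; nra.
have P_ge0 : 0 <= (1 + u) ^+ k by apply: exprn_ge0; lra.
have := ler_wpM2l P_ge0 lower; lra.
Qed.

Lemma expr1D_le_pow4 u k q : 0 <= u -> u <= 1 -> (0 < q)%N ->
  2 * (k%:R * u) <= q%:R -> (1 + u) ^+ k <= 4 ^+ q.
Proof.
move=> u_ge0 u_le1 q_gt0 kuq.
have block : (1 + u) ^+ (k %/ q) <= 2.
  apply: expr1D_le2 => //.
  have q_pos : 0 < q%:R :> R by rewrite ltr0n.
  have : (k %/ q)%:R * q%:R <= k%:R :> R by rewrite -natrM ler_nat leq_divM.
  have : 0 <= (k %/ q)%:R :> R by [].
  nra.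
have rest : (1 + u) ^+ (k %% q) <= 2 ^+ q.
  apply: le_trans (_ : 2 ^+ (k %% q) <= _).
    by apply: lerXn2r; rewrite ?nnegrE; lra.
  by apply: ler_weXn2l; [lra | rewrite ltnW // ltn_pmod].
have -> : 4 ^+ q = 2 ^+ q * 2 ^+ q :> R by rewrite -exprMn; congr (_ ^+ _); ring.
rewrite (divn_eq k q) exprD exprM.
have pow_ge0 n : 0 <= (1 + u) ^+ n by apply: exprn_ge0; lra.
apply: ler_pM rest => //; first exact: exprn_ge0.
by apply: lerXn2r; rewrite ?nnegrE.
Qed.

Lemma expr1D_bounded (M : R) : 0 < M ->
  exists B : R, forall k u, 0 <= u -> u <= 1 -> k%:R * u <= M -> (1 + u) ^+ k <= B.
Proof.
move=> M_gt0.
case: (classic (exists q : nat, 2 * M <= q%:R)) => [[q Mq] | no_nat_above].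
- exists (4 ^+ q) => k u u_ge0 u_le1 kuM.
  apply: expr1D_le_pow4 => //; last by lra.
  by rewrite -(ltr0n R); lra.
- exists (2 * M) => k u u_ge0 u_le1 _.
  have pow2_lt : 2 ^+ k < 2 * M.
    rewrite ltNge; apply/negP => le; apply: no_nat_above.
    by exists (2 ^ k)%N; rewrite natrX.
  apply: le_trans (ltW pow2_lt).
  by apply: lerXn2r; rewrite ?nnegrE; lra.
Qed.

End PowerBounds.

Lemma epoch_expectE (R : realFieldType) k (a p : R) :
  epoch_expect k a p =
  ((a * (1 - p) + (1 - a) * p) ^+ k + (a * p + (1 - a) * (1 - p)) ^+ k) / 2.
Proof.
rewrite /epoch_expect /epochR.
rewrite (addrC (a * (1 - p))) (addrC (a * p)) !exprDn -big_split /= mulr_suml.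
apply: eq_bigr => i _.
rewrite !exprMn -!mulrnDl -mulr_natl.
ring.
Qed.

Lemma epoch_expect_bias (R : realFieldType) k (a p : R) : a = 1 - p \/ a = p ->
  epoch_expect k a p =
  ((1 + (1 - 2 * p) ^+ 2) ^+ k + (1 - (1 - 2 * p) ^+ 2) ^+ k) / 2 ^+ k.+1.
Proof.
move=> a_eq; rewrite epoch_expectE.
set u := (1 - 2 * p) ^+ 2.
have [[-> ->] | [-> ->]] :
    (a * (1 - p) + (1 - a) * p = (1 + u) / 2 /\ a * p + (1 - a) * (1 - p) = (1 - u) / 2)
 \/ (a * (1 - p) + (1 - a) * p = (1 - u) / 2 /\ a * p + (1 - a) * (1 - p) = (1 + u) / 2).
  by case: a_eq => ->; [left | right]; split; rewrite /u; field.
all: by rewrite !expr_div_n exprS; field; rewrite gt_eqF // exprn_gt0.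
Qed.

Theorem lemma9 (R : realFieldType) (c : R) :
  0 < c ->
  exists C' : R,
    forall (p : R) (k : nat),
      0 < p -> p < 1 / 2 ->
      (1 <= k)%N ->
      k%:R <= c / (1 / 2 - p) ^+ 2 ->
      forall a : R, a = 1 - p \/ a = p ->
        epoch_expect k a p <=
          (1 + C' * (1 / 2 - p) ^+ 4 * (k%:R) ^+ 2) / 2 ^+ k.
Proof.
move=> c_gt0.
have [B powB] := @expr1D_bounded R (4 * c) (ltac:(lra)).
exists (16 * B) => p k p_gt0 p_lt _ k_le a a_eq.
rewrite epoch_expect_bias //.
set e := 1 / 2 - p; set u := (1 - 2 * p) ^+ 2.
have u_def : u = 4 * e ^+ 2 by rewrite /u /e; field.
have u_ge0 : 0 <= u := sqr_ge0 _.
have u_le1 : u <= 1 by rewrite /u; nra.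
have ku_le : k%:R * u <= 4 * c.
  have : k%:R * e ^+ 2 <= c by rewrite -ler_pdivlMr ?exprn_gt0 // /e; lra.
  by rewrite u_def; lra.
have plus := @expr1D_le_second_order R u k (ltac:(lra)).
have minus := @expr1D_le_second_order R (- u) k (ltac:(lra)).
rewrite normrN ger0_norm // sqrrN mulrN in minus; rewrite ger0_norm // in plus.
have k2u2_ge0 : 0 <= k%:R ^+ 2 * u ^+ 2 by rewrite mulr_ge0 ?sqr_ge0.
have bounded := ler_wpM2l k2u2_ge0 (powB k u u_ge0 u_le1 ku_le).
rewrite [2 ^+ k.+1]exprS invfM [_ * (_ / _)]mulrA.
apply: ler_wpM2r; first by rewrite invr_ge0 exprn_ge0.
have -> : 16 * B * e ^+ 4 * k%:R ^+ 2 = k%:R ^+ 2 * u ^+ 2 * B by rewrite u_def; ring.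
lra.
Qed.
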